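(* Let $p$ be an odd prime, $q=p^e$, and let $n,k$ be positive integers. Then: (1) For every $y$ in a field extension of $\mathbb{F}_p$ with $y\neq \tfrac12$, $F_n(1,y(1-y))=\dfrac{y^n-(1-y)^n}{2y-1}$; moreover $F_n(1,\tfrac14)=\dfrac{n}{2^{n-1}}$ in $\mathbb{F}_p$. (2) If $\gcd(n,k)=1$, then $F_{np^k}(1,x)=\bigl(F_n(1,x)\bigr)^{p^k}(1-4x)^{\frac{p^k-1}{2}}$ as polynomials over $\mathbb{F}_p$. (3) If $n_1,n_2$ are positive integers with $n_1\equiv n_2\pmod{q^2-1}$, then $F_{n_1}(1,x_0)=F_{n_2}(1,x_0)$ for every $x_0\in\mathbb{F}_q\setminus\{\tfrac14\}$.
   Context: For an integer $n\ge 1$, the $n$-th reversed Dickson polynomial of the third kind is $F_n(a,x)=\sum_{i=0}^{\lfloor n/2\rfloor}\frac{n-2i}{n-i}\binom{n-i}{i}(-x)^i a^{n-2i}$, where each coefficient $\frac{n-2i}{n-i}\binom{n-i}{i}$ is an integer (read in the field), and $F_0(a,x)=0$. Thus $F_n(1,x)$ is a polynomial with coefficients in $\mathbb{F}_p$. *)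

From HB Require Import structures.
From mathcomp Require Import all_boot all_order all_algebra all_field.
Set Implicit Arguments. Unset Strict Implicit. Unset Printing Implicit Defensive.
Import Order.TTheory GRing.Theory Num.Theory.
Local Open Scope ring_scope.

(* Coefficient (n-2i)/(n-i) * C(n-i,i) of the reversed Dickson polynomial of
   the third kind; it is an integer, computed here by exact nat division
   (for n = 0 it is 0, consistent with F_0 = 0). *)
Definition rdick3_coef (n i : nat) : nat :=
  (((n - i.*2) * 'C(n - i, i)) %/ (n - i))%N.

Definition rdick3 {R : comNzRingType} (n : nat) (a x : R) : R :=
  if n is 0 then 0 else
  \sum_(i < n./2.+1) (rdick3_coef n i)%:R * (- x) ^+ i * a ^+ (n - i.*2).

From HB Require Import structures.
From mathcomp Require Import all_boot all_order all_algebra all_field.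
From mathcomp Require Import ring zify.
Set Implicit Arguments. Unset Strict Implicit. Unset Printing Implicit Defensive.
Import Order.TTheory GRing.Theory Num.Theory.
Local Open Scope ring_scope.

(* F_n(1, x) is the sequence u_n with u_0 = 0, u_1 = 1, u_(n+2) = u_(n+1) - x u_n,
   so modulo X^2 - X + x one has X^n = u_n X - x u_(n-1), and identities between the
   u_n are read off by comparing linear remainders.  Part (1) is the Binet formula for
   the roots y, 1 - y of X^2 - X + y(1 - y).  Since (2X - 1)^2 = 1 - 4x modulo
   X^2 - X + x, for odd q we get (2X - 1)^q = (1 - 4x)^((q-1)/2) (2X - 1), while for
   q = p^k the Frobenius gives (2X - 1)^q = 2X^q - 1; hence u_q = (1 - 4x)^((q-1)/2),
   and expanding (X^n)^q gives u_(nq) = u_n^q u_q.  Over F_q the factor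
   (1 - 4x)^((q-1)/2) is +-1 and fixed by the Frobenius, which yields X^(q^2) = X,
   i.e. the period q^2 - 1 of part (3). *)

Section Lucas.
Variable R : comNzRingType.

Fixpoint lucas (x : R) (n : nat) : R :=
  match n with
  | 0 => 0
  | 1 => 1
  | (m.+1 as n').+1 => lucas x n' - x * lucas x m
  end.

Lemma lucasSS x n : lucas x n.+2 = lucas x n.+1 - x * lucas x n.
Proof. by []. Qed.

Definition lucas_sum (x : R) (n : nat) : R :=
  \sum_(i < n) 'C(n.-1 - i, i)%:R * (- x) ^+ i.

Lemma lucas_sumSS x n :
  lucas_sum x n.+2 = lucas_sum x n.+1 - x * lucas_sum x n.
Proof.
rewrite /lucas_sum big_ord_recl [in RHS]big_ord_recl big_ord_recr /=.
rewrite subnn bin0n mul0r addr0 !subn0 !bin0 !expr0.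
have pascal : \sum_(i < n) 'C(n.+1 - bump 0 i, bump 0 i)%:R * (- x) ^+ bump 0 i
    = \sum_(i < n) 'C(n - bump 0 i, bump 0 i)%:R * (- x) ^+ bump 0 i
    - x * \sum_(i < n) 'C(n.-1 - i, i)%:R * (- x) ^+ i.
  rewrite mulr_sumr -sumrN -big_split /=; apply: eq_bigr => i _.
  have i_lt := ltn_ord i; rewrite /bump /= add1n.
  have -> : (n.+1 - i.+1 = (n - i.+1).+1)%N by lia.
  have -> : (n - i.+1 = n.-1 - i)%N by lia.
  by rewrite binS natrD exprS; ring.
by rewrite pascal; ring.
Qed.

Lemma lucas_binomial x n : lucas x n = lucas_sum x n.
Proof.
elim/ltn_ind: n => -[|[|n]] IH.
- by rewrite /lucas_sum big_ord0.
- by rewrite /lucas_sum big_ord1 /= bin0 mulr1.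
- by rewrite lucasSS lucas_sumSS !IH.
Qed.

Lemma rdick3_coefE n i : rdick3_coef n.+1 i = 'C(n - i, i).
Proof.
rewrite /rdick3_coef -addnn; have [le_2i_n|lt_n_2i] := leqP (i + i) n.
  have -> : (n.+1 - i = (n - i).+1)%N by lia.
  have -> : (n.+1 - (i + i) = (n - i).+1 - i)%N by lia.
  by rewrite -mul_bin_down mulKn.
have -> : (n.+1 - (i + i) = 0)%N by lia.
by rewrite mul0n div0n bin_small //; lia.
Qed.

Lemma rdick3_lucas n x : rdick3 n 1 x = lucas x n.
Proof.
rewrite lucas_binomial; case: n => [|n]; first by rewrite /lucas_sum big_ord0.
have half_le : (n.+1./2 < n.+1)%N by rewrite ltn_half_double -addnn; lia.
pose G (i : nat) := (rdick3_coef n.+1 i)%:R * (- x) ^+ i * 1 ^+ (n.+1 - i.*2).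
rewrite /rdick3 /lucas_sum (big_ord_widen _ G half_le) big_mkcond /=.
apply: eq_bigr => -[i i_lt] _ /=; rewrite /G expr1n mulr1 rdick3_coefE.
have -> : (i < n.+1./2.+1)%N = (i + i <= n.+1)%N.
  by rewrite ltnS leqNgt ltn_half_double -leqNgt addnn.
case: leqP => // lt_n_2i.
by rewrite bin_small ?mul0r //; lia.
Qed.
End Lucas.

Section PolyCongruence.
Variables (R : comNzRingType) (m : {poly R}).

Definition eqmod (A B : {poly R}) := exists S, A = B + S * m.

Lemma eqmod_refl A : eqmod A A.
Proof. by exists 0; rewrite mul0r addr0. Qed.

Lemma eqmodE A B : A = B -> eqmod A B.
Proof. by move->; apply: eqmod_refl. Qed.

Lemma eqmod_sym A B : eqmod A B -> eqmod B A.
Proof. by case=> S ->; exists (- S); ring. Qed.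

Lemma eqmod_trans B A C : eqmod A B -> eqmod B C -> eqmod A C.
Proof. by case=> S -> [T ->]; exists (T + S); ring. Qed.

Lemma eqmodD A B C D : eqmod A B -> eqmod C D -> eqmod (A + C) (B + D).
Proof. by case=> S -> [T ->]; exists (S + T); ring. Qed.

Lemma eqmodM A B C D : eqmod A B -> eqmod C D -> eqmod (A * C) (B * D).
Proof. by case=> S -> [T ->]; exists (S * D + B * T + S * T * m); ring. Qed.

Lemma eqmodX A B n : eqmod A B -> eqmod (A ^+ n) (B ^+ n).
Proof.
move=> eqAB; elim: n => [|n IH]; first exact: eqmod_refl.
by rewrite !exprS; apply: eqmodM.
Qed.

Lemma size_linear (a b : R) : (size (a%:P * 'X + b%:P)%R <= 2)%N.
Proof. by rewrite size_MXaddC; case: ifP => // _; rewrite ltnS size_polyC_leq1. Qed.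

Lemma eqmod_linear a b c d : m \is monic -> (2 < size m)%N ->
  eqmod (a%:P * 'X + b%:P) (c%:P * 'X + d%:P) -> a = c /\ b = d.
Proof.
move=> monic_m size_m [S eqS].
have diff : (a - c)%:P * 'X + (b - d)%:P = S * m.
  transitivity ((a%:P * 'X + b%:P) - (c%:P * 'X + d%:P)); first by rewrite !polyCB; ring.
  by rewrite eqS; ring.
have S0 : S = 0.
  apply/eqP; apply: contraTT (size_linear (a - c) (b - d)); rewrite diff => nzS.
  have := size_poly_gt0 S; rewrite nzS size_Mmonic // -ltnNge; lia.
move: diff; rewrite S0 mul0r => diff.
have := congr1 (coefp 1) diff; have := congr1 (coefp 0) diff.
by rewrite /= !coefD !coefMX !coefC /= !(addr0, add0r, coef0) => /subr0_eq -> /subr0_eq ->.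
Qed.

Lemma eqmod_Xn_periodic N a j : (0 < a)%N -> eqmod 'X^(N.+1) 'X ->
  eqmod 'X^(a + j * N)%N 'X^a.
Proof.
case: a => // a _ XN; elim: j => [|j IH]; first by rewrite addn0; apply: eqmod_refl.
have -> : (a.+1 + j.+1 * N = (a + j * N) + N.+1)%N by rewrite mulSn; lia.
rewrite exprD; apply: eqmod_trans IH; rewrite addSn (exprSr _ (a + j * N)).
exact: eqmodM (eqmod_refl _) _.
Qed.
End PolyCongruence.

Section LucasCongruence.
Variables (R : comNzRingType) (x : R).

Definition lucas_poly : {poly R} := 'X^2 - 'X + x%:P.

Lemma size_lucas_poly : size lucas_poly = 3%N.
Proof.
rewrite /lucas_poly -addrA size_addl ?size_polyXn //.
by rewrite (leq_ltn_trans (size_add _ _)) // size_polyC size_opp size_polyX; case: (x != 0).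
Qed.

Lemma lucas_poly_monic : lucas_poly \is monic.
Proof.
apply/monicP; rewrite /lucas_poly -addrA lead_coefDl ?lead_coefXn //.
by rewrite size_polyXn (leq_ltn_trans (size_add _ _)) // size_polyC size_opp size_polyX; case: (x != 0).
Qed.

Local Notation eqmodL := (eqmod lucas_poly).

Lemma eqmod_Xn n : (0 < n)%N ->
  eqmodL 'X^n ((lucas x n)%:P * 'X + (- (x * lucas x n.-1))%:P).
Proof.
case: n => // n _; elim: n => [|n IH].
  by rewrite mulr0 oppr0 addr0 mul1r; apply: eqmod_refl.
rewrite exprS; apply: eqmod_trans (eqmodM (eqmod_refl _ 'X) IH) _.
have X2 : eqmodL 'X^2 ('X - x%:P) by exists 1; rewrite /lucas_poly; ring.
apply: eqmod_trans (_ : eqmodL _ ((lucas x n.+1)%:P * 'X^2 - (x * lucas x n)%:P * 'X)) _.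
  by apply: eqmodE; rewrite polyCN; ring.
apply: eqmod_trans (eqmodD (eqmodM (eqmod_refl _ _) X2) (eqmod_refl _ _)) _.
by apply: eqmodE; rewrite lucasSS /= !polyCN !polyCB !polyCM; ring.
Qed.

Lemma eqmod_lucas_linear a b c d :
  eqmodL (a%:P * 'X + b%:P) (c%:P * 'X + d%:P) -> a = c /\ b = d.
Proof. by apply: eqmod_linear lucas_poly_monic _; rewrite size_lucas_poly. Qed.

Lemma lucas_eqmodX n a b : (0 < n)%N ->
  eqmodL 'X^n (a%:P * 'X + b%:P) -> lucas x n = a.
Proof.
move=> n_gt0 Xn.
by have [] := eqmod_lucas_linear (eqmod_trans (eqmod_sym (eqmod_Xn n_gt0)) Xn).
Qed.

Lemma eqmod_shift_odd k : eqmodL ((2%:R * 'X - 1) ^+ k.*2.+1)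
  (((1 - 4%:R * x) ^+ k)%:P * (2%:R * 'X - 1)).
Proof.
have sq : eqmodL ((2%:R * 'X - 1) ^+ 2) (1 - 4%:R * x)%:P.
  by exists 4%:R; rewrite /lucas_poly polyCB polyCM polyC1 -polyC_natr; ring.
rewrite exprS -mul2n exprM mulrC polyC_exp.
exact: eqmodM (eqmodX k sq) (eqmod_refl _ _).
Qed.
End LucasCongruence.

Lemma lucas_root_diff (R : comNzRingType) (y : R) n :
  (2%:R * y - 1) * lucas (y * (1 - y)) n = y ^+ n - (1 - y) ^+ n.
Proof.
elim/ltn_ind: n => -[|[|n]] IH.
- by rewrite mulr0 !expr0 subrr.
- by rewrite mulr1 !expr1; ring.
- by rewrite lucasSS mulrBr mulrCA !IH // !exprS; ring.
Qed.

Lemma lucas_quarter (F : fieldType) n : (2%:R : F) != 0 ->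
  lucas (4%:R^-1 : F) n * 2%:R ^+ n = n.*2%:R.
Proof.
move=> two_nz; have four : (4%:R : F) = 2%:R * 2%:R by rewrite -natrM.
elim/ltn_ind: n => -[|[|n]] IH.
- by rewrite mul0r.
- by rewrite expr1 mul1r.
- have := IH n (ltnW (ltnSn _)); have := IH n.+1 (ltnSn _); rewrite !exprS => IH1 IH0.
  rewrite lucasSS mulrBl.
  have -> : lucas (4%:R^-1) n.+1 * (2%:R * (2%:R * 2%:R ^+ n)) = 2%:R * n.+1.*2%:R :> F.
    by rewrite -IH1; ring.
  have -> : 4%:R^-1 * lucas (4%:R^-1) n * (2%:R * (2%:R * 2%:R ^+ n)) = n.*2%:R :> F.
    by rewrite -IH0; field; rewrite four mulf_neq0.
  by rewrite -!mul2n !natrM -[n.+2]addn2 -[n.+1]addn1 !natrD; ring.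
Qed.

Lemma exprD_pcharX (R : comNzRingType) p k (a b : R) : p \in [pchar R] ->
  (a + b) ^+ (p ^ k) = a ^+ (p ^ k) + b ^+ (p ^ k).
Proof.
move=> pcharRp; apply: exprDn_pchar.
by rewrite (eq_pnat _ (pcharf_eq pcharRp)) pnatX pnat_id ?(pcharf_prime pcharRp).
Qed.

Lemma odd_predhalfK n : odd n -> n = ((n.-1)./2).*2.+1.
Proof. by case: n => //= n /negbTE n_even; rewrite -{1}(odd_double_half n) n_even. Qed.

Section OddCharacteristic.
Variables (R : idomainType) (p : nat).
Hypotheses (pcharRp : p \in [pchar R]) (p_odd : odd p).

Lemma pchar_odd_two_neq0 : (2%:R : R) != 0.
Proof.
rewrite -(dvdn_pcharf pcharRp); apply/negP => /(dvdn_leq (isT : (0 < 2)%N)).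
by have := pcharf_prime pcharRp; move: p_odd; case: p => [|[|[|]]].
Qed.

Variable k : nat.
Let q := (p ^ k)%N.

Lemma expn_pchar_gt0 : (0 < q)%N.
Proof. by rewrite expn_gt0 prime_gt0 // (pcharf_prime pcharRp). Qed.

Lemma shift_expX_pchar : (2%:R * 'X - 1 : {poly R}) ^+ q = 2%:R * 'X^q - 1.
Proof.
have pcharP : p \in [pchar {poly R}] by rewrite pchar_poly.
rewrite exprD_pcharX // exprMn -signr_odd oddX p_odd orbT expr1.
by rewrite -[2%:R]/(1 + 1 : {poly R}) exprD_pcharX // expr1n.
Qed.

Variable x : R.
Local Notation eqmodL := (eqmod (lucas_poly x)).

Lemma lucas_mul_pchar n : (0 < n)%N ->
  lucas x (n * q) = lucas x n ^+ q * lucas x q.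
Proof.
move=> n_gt0; pose c j := - (x * lucas x j.-1).
apply: (@lucas_eqmodX _ _ _ _ (lucas x n ^+ q * c q + c n ^+ q)).
  by rewrite muln_gt0 n_gt0 expn_pchar_gt0.
have pcharP : p \in [pchar {poly R}] by rewrite pchar_poly.
rewrite exprM; apply: eqmod_trans (eqmodX q (eqmod_Xn x n_gt0)) _.
rewrite exprD_pcharX // exprMn -!polyC_exp.
apply: eqmod_trans (eqmodD (eqmodM (eqmod_refl _ _) (eqmod_Xn x expn_pchar_gt0)) (eqmod_refl _ _)) _.
by apply: eqmodE; rewrite polyCD !polyCM /c -/q; ring.
Qed.

Lemma lucas_pchar : lucas x q = (1 - 4%:R * x) ^+ (q.-1)./2.
Proof.
set D := (1 - 4%:R * x) ^+ (q.-1)./2.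
have q_odd : odd q by rewrite oddX p_odd orbT.
have shift_q := eqmod_shift_odd x (q.-1)./2.
rewrite -(odd_predhalfK q_odd) shift_expX_pchar in shift_q.
have shift_lucas : eqmodL (2%:R * 'X^q - 1)
    ((2%:R * lucas x q)%:P * 'X + (- 1 - 2%:R * (x * lucas x q.-1))%:P).
  apply: eqmod_trans (eqmodD (eqmodM (eqmod_refl _ _) (eqmod_Xn x expn_pchar_gt0)) (eqmod_refl _ _)) _.
  by apply: eqmodE; rewrite polyCB polyCN !polyCM -polyC_natr; ring.
have lin : eqmodL (D%:P * (2%:R * 'X - 1)) ((2%:R * D)%:P * 'X + (- D)%:P).
  by apply: eqmodE; rewrite polyCN polyCM -polyC_natr; ring.
have [/(mulfI pchar_odd_two_neq0) //] :=
  eqmod_lucas_linear (eqmod_trans (eqmod_sym shift_lucas) (eqmod_trans shift_q lin)).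
Qed.
End OddCharacteristic.

Lemma expf_card_half_sqr (K : finFieldType) (z : K) : odd #|K| -> z != 0 ->
  (z ^+ (#|K|.-1)./2) ^+ 2 = 1.
Proof.
move=> /odd_predhalfK card_half z_nz; rewrite -exprM muln2.
by apply: (mulIf z_nz); rewrite mul1r -exprSr -card_half expf_card.
Qed.

Section FiniteField.
Variables (K : finFieldType) (p e : nat).
Hypotheses (p_prime : prime p) (p_odd : odd p) (cardK : #|K| = (p ^ e)%N).
Variable x : K.
Hypothesis disc_nz : 1 - 4%:R * x != 0.
Let q := (p ^ e)%N.
Let eps := (1 - 4%:R * x) ^+ (q.-1)./2.
Local Notation eqmodL := (eqmod (lucas_poly x)).

Lemma pchar_card : p \in [pchar K].
Proof. exact: card_finPcharP cardK p_prime. Qed.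

Lemma eps_sqr : eps * eps = 1.
Proof. by rewrite -expr2 /eps /q -cardK expf_card_half_sqr // cardK oddX p_odd orbT. Qed.

Lemma shift_expX_card2 : eqmodL ((2%:R * 'X - 1) ^+ (q * q)) (2%:R * 'X - 1).
Proof.
have q_odd : odd q by rewrite oddX p_odd orbT.
have shift_q := eqmod_shift_odd x (q.-1)./2; rewrite -(odd_predhalfK q_odd) in shift_q.
rewrite exprM; apply: eqmod_trans (eqmodX q shift_q) _.
have eps_card : eps ^+ q = eps by rewrite /q -cardK expf_card.
rewrite exprMn -polyC_exp -/eps eps_card.
apply: eqmod_trans (eqmodM (eqmod_refl _ _) shift_q) _.
by apply: eqmodE; rewrite mulrA -polyCM -/eps eps_sqr mul1r.
Qed.

Lemma expX_card2 : eqmodL 'X^(q * q) 'X.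
Proof.
have shift := shift_expX_card2; rewrite /q -expnD (shift_expX_pchar pchar_card p_odd) in shift.
have half : (2%:R^-1)%:P * 2%:R = 1 :> {poly K}.
  by rewrite -polyC_natr -polyCM mulVf ?(pchar_odd_two_neq0 pchar_card).
have := eqmodM (eqmod_refl _ (2%:R^-1)%:P) (eqmodD shift (eqmod_refl _ 1)).
by rewrite !subrK !mulrA half !mul1r expnD.
Qed.

Lemma lucas_periodic n1 n2 : (0 < n1)%N -> (0 < n2)%N ->
  n1 = n2 %[mod q ^ 2 - 1] -> lucas x n1 = lucas x n2.
Proof.
wlog le12 : n1 n2 / (n1 <= n2)%N.
  by move=> wlog_le n1_gt0 n2_gt0 eq12; case: (leqP n1 n2) => [|/ltnW] le;
    [exact: wlog_le | symmetry; exact: wlog_le].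
move=> n1_gt0 n2_gt0 /eqP; rewrite eq_sym eqn_mod_dvd // => /dvdnP [j n2E].
have qexpn_pchar_gt0 : (0 < q * q)%N by rewrite muln_gt0 andbb (expn_pchar_gt0 pchar_card e).
have period := eqmod_Xn_periodic j n1_gt0 (_ : eqmodL 'X^((q * q).-1.+1) 'X).
rewrite prednK // in period; have n2E' : n2 = (n1 + j * (q * q).-1)%N.
  by move: n2E; rewrite mulnn -subn1; lia.
apply/esym/(lucas_eqmodX n2_gt0); rewrite n2E'.
exact: eqmod_trans (period expX_card2) (eqmod_Xn x n1_gt0).
Qed.
End FiniteField.

Theorem theorem2p3 (p e n k : nat) :
  prime p -> odd p -> (0 < e)%N -> (0 < n)%N -> (0 < k)%N ->
  (* (1) *)
  ((forall (K : fieldType), p \in [pchar K] ->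
     forall y : K, y != 2^-1 ->
       rdick3 n 1 (y * (1 - y)) = (y ^+ n - (1 - y) ^+ n) / (2 * y - 1))
   /\ rdick3 n (1 : 'F_p) (4^-1) = n%:R / 2 ^+ (n - 1))
  (* (2) *)
  /\ (coprime n k ->
      rdick3 (n * p ^ k) (1 : {poly 'F_p}) 'X
        = (rdick3 n (1 : {poly 'F_p}) 'X) ^+ (p ^ k)
          * (1 - 4%:R *: 'X) ^+ ((p ^ k - 1)./2))
  (* (3) *)
  /\ (forall n1 n2 : nat, (0 < n1)%N -> (0 < n2)%N ->
      n1 = n2 %[mod (p ^ e) ^ 2 - 1] ->
      forall (K : finFieldType), #|K| = (p ^ e)%N ->
      forall x0 : K, x0 != 4^-1 -> rdick3 n1 1 x0 = rdick3 n2 1 x0).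
Proof.
move=> p_prime p_odd _ n_gt0 _; split; [split | split].
- move=> K pcharKp y y_neq_half; rewrite rdick3_lucas -lucas_root_diff [_ * lucas _ _]mulrC mulfK //.
  have two_nz := pchar_odd_two_neq0 pcharKp p_odd.
  apply: contra y_neq_half; rewrite subr_eq0 => /eqP two_y.
  by rewrite -[y](mulKf two_nz) two_y mulr1.
- have two_nz := pchar_odd_two_neq0 (pchar_Fp p_prime) p_odd.
  case: n n_gt0 => // m _; rewrite rdick3_lucas subn1 succnK.
  apply: (mulIf (expf_neq0 m.+1 two_nz)); rewrite lucas_quarter // exprS.
  by rewrite -mul2n natrM; field; rewrite expf_neq0.
-
  move=> _; rewrite !rdick3_lucas -mul_polyC polyC_natr subn1.
  have pcharP : p \in [pchar {poly 'F_p}] by rewrite pchar_poly pchar_Fp.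
  by rewrite lucas_mul_pchar // lucas_pchar.
- move=> n1 n2 n1_gt0 n2_gt0 n12 K cardK x0 x0_neq; rewrite !rdick3_lucas.
  apply: (lucas_periodic p_prime p_odd cardK) n1_gt0 n2_gt0 n12.
  apply: contra x0_neq; rewrite subr_eq0 => /eqP four_x0.
  have four_nz : (4%:R : K) != 0.
    by rewrite (natrM _ 2 2) mulf_neq0 // (pchar_odd_two_neq0 (pchar_card p_prime cardK)).
  by rewrite -[x0](mulKf four_nz) -four_x0 mulr1.
Qed.
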